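(* Let $p$ be an odd prime, let $x, y \in \mathbb{Z}$ satisfy $x^2 - 2 = y^p$ with $y \neq -1$, and let $a, b \in \mathbb{Z}$ satisfy $x + \sqrt{2} = (1+\sqrt{2})(a+b\sqrt{2})^p$. Then: (1) $v_p(a-1) = v_p(b)$; (2) if $p \mid b$ then $v_p(x-1) = v_p(b) + 1$, and otherwise $p \nmid (x-1)$; in particular either $p \nmid (x-1)$ or $p^2 \mid (x-1)$; (3) if $p \mid a$ then $v_p(x-2) = v_p(a) + 1$, and otherwise $p \nmid (x-2)$; in particular either $p \nmid (x-2)$ or $p^2 \mid (x-2)$.
   Context: $v_p$ denotes the $p$-adic valuation. *)

From HB Require Import structures.
From mathcomp Require Import all_boot all_order all_algebra.
Set Implicit Arguments. Unset Strict Implicit. Unset Printing Implicit Defensive.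
Import Order.TTheory GRing.Theory Num.Theory.

(* p-adic valuation of an integer, with v_p(0) = +oo encoded as None. *)
Definition vp (p : nat) (z : int) : option nat :=
  if z == 0 then None else Some (logn p `|z|%N).

From mathcomp Require Import all_boot all_order all_algebra.
From mathcomp Require Import zify ring.

(* Write (a + b√2)^p = A + B√2.  Comparing the coordinates of
   x + √2 = (1 + √2)(A + B√2) gives x = A + 2B and A + B = 1, so x - 1 = B and
   x - 2 = -A.  The binomial expansion gives B ≡ p a^(p-1) b (mod b^3) and
   A ≡ p a b^(p-1) 2^((p-1)/2) (mod a^3), whence v_p(B) = v_p(b) + 1 if p | b and
   v_p(A) = v_p(a) + 1 if p | a; it also gives A ≡ a^p (mod p b^2) and
   B ≡ 2^((p-1)/2) b^p (mod p), which settle p ∤ b and p ∤ a.  By Fermat and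
   A + B = 1, p | a - 1 iff p | b, and if p^m (m >= 1) divides both a - 1 and b,
   expanding a^p = (1 + (a - 1))^p in A + B = 1 shows p^(m+1) | (a - 1) + b; so
   a - 1 and b have the same valuation. *)

Set Implicit Arguments.
Unset Strict Implicit.
Unset Printing Implicit Defensive.

Import Order.TTheory GRing.Theory Num.Theory.
Local Open Scope ring_scope.

Lemma dvdz_eq_of_dvd_sub (d u w : int) :
  (d %| u - w)%Z -> (d %| u)%Z = (d %| w)%Z.
Proof. by move=> duw; rewrite -[u](subrK w) rpredDl. Qed.

Lemma dvdz_expSW (d z : int) k : (d ^+ k.+1 %| z)%Z -> (d ^+ k %| z)%Z.
Proof. exact/dvdz_trans/dvdz_exp2l. Qed.

Lemma dvdz_exp_mul (d z : int) k j m :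
  (d ^+ k %| z)%Z -> (m <= k * j)%N -> (d ^+ m %| z ^+ j)%Z.
Proof.
by move=> dkz le_m_kj; rewrite (dvdz_trans (dvdz_exp2l d le_m_kj)) // exprM dvdz_exp2r.
Qed.

Lemma eq_dvdz_exp_of_dvdzD (d u w : int) n :
  (d %| u)%Z = (d %| w)%Z ->
  (forall m, (d ^+ m.+1 %| u)%Z -> (d ^+ m.+1 %| w)%Z -> (d ^+ m.+2 %| u + w)%Z) ->
  (d ^+ n %| u)%Z = (d ^+ n %| w)%Z.
Proof.
move=> duw dvdzD; elim: n => [|[|m] IHm]; first by rewrite !expr0 !dvd1z.
  by rewrite !expr1.
have [dmu|ndmu] := boolP (d ^+ m.+1 %| u)%Z.
  rewrite -[(_ %| w)%Z]rpredN; apply: dvdz_eq_of_dvd_sub.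
  by rewrite opprK dvdzD -?IHm.
by apply/idP/idP => /dvdz_expSW; rewrite -?IHm (negbTE ndmu).
Qed.

Section PrimeDivisibility.
Variable p : nat.
Hypothesis p_pr : prime p.
Local Notation P := (p%:Z).

Lemma primez_neq0 : P != 0.
Proof. by rewrite eqz_nat -lt0n prime_gt0. Qed.

Lemma primez_ndvd1 : ~~ (P %| 1%R)%Z.
Proof. by rewrite dvdz1 absz_nat; apply/eqP=> p1; move: p_pr; rewrite p1. Qed.

Lemma Euclid_dvdzM (u w : int) : (P %| u * w)%Z = (P %| u)%Z || (P %| w)%Z.
Proof. by rewrite !dvdzE abszM Euclid_dvdM. Qed.

Lemma Euclid_dvdzX (u : int) k : (0 < k)%N -> (P %| u ^+ k)%Z = (P %| u)%Z.
Proof. by case: k => // k _; rewrite !dvdzE abszX Euclid_dvdX // andbT. Qed.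

Lemma dvdz_pexp_logn (z : int) n :
  z != 0 -> (P ^+ n %| z)%Z = (n <= logn p `|z|)%N.
Proof. by move=> z0; rewrite dvdzE abszX absz_nat pfactor_dvdn ?absz_gt0. Qed.

Lemma vp_eq (u w : int) :
  (forall n, (P ^+ n %| u)%Z = (P ^+ n %| w)%Z) -> vp p u = vp p w.
Proof.
have eq0 (u' w' : int) : (forall n, (P ^+ n %| u')%Z = (P ^+ n %| w')%Z) ->
    u' = 0 -> w' = 0.
  move=> duw u0; apply/eqP/negPn/negP=> w0.
  by have := duw (logn p `|w'|).+1; rewrite u0 dvdz0 dvdz_pexp_logn // ltnn.
move=> duw; rewrite /vp.
have [/eqP u0|u0] := boolP (u == 0); first by rewrite (eq0 u w duw u0) eqxx.
have [/eqP w0|w0] := boolP (w == 0).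
  by rewrite (eq0 w u (fun n => esym (duw n)) w0) eqxx in u0.
congr Some; apply/anti_leq.
by rewrite -(dvdz_pexp_logn _ w0) -duw dvdz_pexp_logn // leqnn /=
  -(dvdz_pexp_logn _ u0) duw dvdz_pexp_logn // leqnn.
Qed.

Lemma vp_succ (u w : int) :
  (forall n, (P ^+ n.+1 %| u)%Z = (P ^+ n %| w)%Z) -> vp p u = omap S (vp p w).
Proof.
move=> duw; rewrite /vp.
have [/eqP u0|u0] := boolP (u == 0); have [/eqP w0|w0] := boolP (w == 0) => //.
- by have := duw (logn p `|w|).+1; rewrite u0 dvdz0 dvdz_pexp_logn // ltnn.
- by have := duw (logn p `|u|); rewrite w0 dvdz0 dvdz_pexp_logn // ltnn.
have le_logn n : (n.+1 <= logn p `|u|)%N = (n <= logn p `|w|)%N.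
  by rewrite -!dvdz_pexp_logn.
congr Some; apply/anti_leq; rewrite le_logn leqnn /=.
by case: (logn p `|u|) le_logn => // k le_logn; rewrite andbT ltnS -(le_logn k).
Qed.

Lemma fermat_little_int (u : int) : (P %| u ^+ p - u)%Z.
Proof.
rewrite -eqz_mod_dvd -modzXm.
have r0 : 0 <= (u %% P)%Z by apply: modz_ge0; apply: primez_neq0.
rewrite -(gez0_abs r0) -natz -natrX natz !modz_nat fermat_little //.
by rewrite natz -modz_nat (gez0_abs r0) modz_mod.
Qed.

Lemma dvdz_pexp_cube (w : int) n :
  (P %| w)%Z -> (P ^+ n %| w)%Z -> (P ^+ n.+2 %| w ^+ 3)%Z.
Proof.
case: n => [|n] pw pnw; last by apply: dvdz_exp_mul pnw _; lia.
by apply: (@dvdz_exp_mul _ _ 1).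
Qed.

Lemma dvdz_pexpS_of_cube (u w e : int) n :
  (P %| w)%Z -> ~~ (P %| e)%Z -> (w ^+ 3 %| u - P * e * w)%Z ->
  (P ^+ n.+1 %| u)%Z = (P ^+ n %| w)%Z.
Proof.
move=> pw pe w3u; elim: n => [|n IHn].
  rewrite expr0 dvd1z expr1 (dvdz_eq_of_dvd_sub (dvdz_trans _ w3u)).
    by rewrite -mulrA dvdz_mulr.
  by rewrite Euclid_dvdzX.
have [pnw|npnw] := boolP (P ^+ n %| w)%Z; last first.
  by apply/idP/idP => /dvdz_expSW; rewrite ?IHn (negbTE npnw).
rewrite (dvdz_eq_of_dvd_sub (dvdz_trans (dvdz_pexp_cube pw pnw) w3u)).
rewrite exprS -mulrA dvdz_mul2l ?primez_neq0 // Gauss_dvdzr //.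
by apply: coprimezXl; rewrite coprimezE absz_nat prime_coprime -?dvdzE.
Qed.

Lemma vp_succ_cases (u w : int) :
  ((P %| w)%Z -> forall n, (P ^+ n.+1 %| u)%Z = (P ^+ n %| w)%Z) ->
  (P %| u)%Z = (P %| w)%Z ->
  ((P %| w)%Z -> vp p u = omap S (vp p w)) /\
  (~~ (P %| w)%Z -> ~~ (P %| u)%Z) /\
  (~~ (P %| u)%Z \/ ((p ^ 2)%:Z %| u)%Z).
Proof.
move=> dvdz_uw puw; split=> [pw|]; first exact/vp_succ/dvdz_uw.
split=> [|]; first by rewrite puw.
have [pu|] := boolP (P %| u)%Z; last by left.
by right; rewrite -natz natrX natz (dvdz_uw _ 1%N) -?puw.
Qed.

Lemma primez_dvd_bin i : (0 < i < p)%N -> (P %| 'C(p, i)%:Z)%Z.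
Proof. by move=> lt0ip; rewrite dvdzE absz_nat prime_dvd_bin. Qed.

Lemma dvdz_pexp_add1_exp (c : int) n : (2 < p)%N -> (P ^+ n.+1 %| c)%Z ->
  (P ^+ n.+3 %| (1 + c) ^+ p - 1 - P * c)%Z.
Proof.
move=> p_gt2 pc; have lt1p : (1 < p.+1)%N by lia.
rewrite [1 + c]addrC exprD1n (bigD1 ord0) //= (bigD1 (Ordinal lt1p)) //=.
rewrite bin0 bin1 expr0 expr1 mulr1n -mulr_natl natz.
rewrite (_ : forall u v w : int, u + (v + w) - u - v = w); last by move=> *; ring.
apply: rpred_sum => i; rewrite -!(inj_eq val_inj) /= => /andP[i_neq0 i_neq1].
rewrite -mulr_natl natz; have := ltn_ord i; rewrite ltnS leq_eqVlt.
case/orP=> [/eqP->|ltip].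
  by rewrite binn mul1r; apply: dvdz_exp_mul pc _; nia.
have -> : c ^+ i = c ^+ 2 * c ^+ (i - 2) by rewrite -exprD subnKC //; lia.
have c2 : (P ^+ n.+2 %| c ^+ 2)%Z by apply: dvdz_exp_mul pc _; lia.
rewrite mulrA exprS; apply/dvdz_mulr/dvdz_mul => //.
by apply: primez_dvd_bin; lia.
Qed.

End PrimeDivisibility.

Definition zsqrt_expr_re (d : int) (n : nat) (a b : int) : int :=
  \sum_(i < n.+1 | ~~ odd i) 'C(n, i)%:Z * a ^+ (n - i) * b ^+ i * d ^+ i./2.

Definition zsqrt_expr_im (d : int) (n : nat) (a b : int) : int :=
  \sum_(i < n.+1 | odd i) 'C(n, i)%:Z * a ^+ (n - i) * b ^+ i * d ^+ i./2.

Lemma zsqrt_exprE (R : comPzRingType) (d : int) (s : R) :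
  s * s = d%:~R -> forall n (a b : int),
  (a%:~R + b%:~R * s) ^+ n =
    (zsqrt_expr_re d n a b)%:~R + (zsqrt_expr_im d n a b)%:~R * s.
Proof.
move=> ssd n a b.
have sX i : s ^+ i = d%:~R ^+ i./2 * s ^+ odd i.
  by rewrite -{1}(odd_double_half i) exprD -mul2n exprM expr2 ssd mulrC.
rewrite exprDn (bigID (fun i : 'I_n.+1 => odd i)) /= addrC.
rewrite !rmorph_sum big_distrl /=; congr (_ + _); apply: eq_bigr => i oddi.
  by rewrite exprMn sX (negbTE oddi) -mulr_natr !intrM !rmorphXn /=; ring.
by rewrite exprMn sX oddi -mulr_natr !intrM !rmorphXn /=; ring.
Qed.

Section ZsqrtExprCongruences.
Variables (d a b : int).

Lemma zsqrt_expr_im_mod_b3 n : (0 < n)%N ->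
  (b ^+ 3 %| zsqrt_expr_im d n a b - n%:Z * a ^+ n.-1 * b)%Z.
Proof.
move=> n_gt0; have lt1n : (1 < n.+1)%N by rewrite ltnS.
rewrite /zsqrt_expr_im (bigD1 (Ordinal lt1n)) //= bin1 subn1 expr1 expr0 mulr1.
rewrite addrAC subrr add0r.
apply: rpred_sum => i; rewrite -(inj_eq val_inj) /= => /andP[oddi i_neq1].
have i_ge3 : (3 <= i)%N by case: (nat_of_ord i) oddi i_neq1 => [|[|[|]]].
by rewrite mulrAC; apply/dvdz_mull/dvdz_exp2l.
Qed.

Lemma zsqrt_expr_re_mod_a3 n : odd n ->
  (a ^+ 3 %| zsqrt_expr_re d n a b - n%:Z * a * b ^+ n.-1 * d ^+ n./2)%Z.
Proof.
case: n => // m /= evenm; have ltmm2 : (m < m.+2)%N by [].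
rewrite /zsqrt_expr_re (bigD1 (Ordinal ltmm2)) ?evenm //= binSn subSnn expr1.
rewrite uphalf_half (negbTE evenm) addrAC subrr add0r.
apply: rpred_sum => i; rewrite -(inj_eq val_inj) /= => /andP[eveni i_neqm].
have i_lem2 : (i <= m - 2)%N.
  have := odd_double_half i; have := odd_double_half m.
  rewrite (negbTE eveni) (negbTE evenm) !add0n.
  have := ltn_ord i; move: i_neqm; lia.
by rewrite -!mulrA mulrCA; apply/dvdz_mulr/dvdz_exp2l; lia.
Qed.

Variable p : nat.
Hypotheses (p_pr : prime p) (p_odd : odd p).
Local Notation P := (p%:Z).

Lemma zsqrt_expr_re_mod_pb2 : (P * b ^+ 2 %| zsqrt_expr_re d p a b - a ^+ p)%Z.
Proof.
rewrite /zsqrt_expr_re (bigD1 ord0) //= bin0 subn0 !expr0 !mulr1 mul1r.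
rewrite addrAC subrr add0r.
apply: rpred_sum => i; rewrite -(inj_eq val_inj) /= => /andP[eveni i_neq0].
have i_ge2 : (2 <= i)%N by case: (nat_of_ord i) eveni i_neq0 => [|[]].
have ltip : (i < p)%N.
  by rewrite ltn_neqAle -ltnS ltn_ord andbT; apply: contraNneq eveni => ->.
apply: dvdz_mulr; rewrite mulrAC; apply/dvdz_mulr/dvdz_mul; last exact: dvdz_exp2l.
by apply: (primez_dvd_bin p_pr); rewrite ltip; case: (nat_of_ord i) i_neq0.
Qed.

Lemma zsqrt_expr_im_mod_p : (P %| zsqrt_expr_im d p a b - b ^+ p * d ^+ p./2)%Z.
Proof.
rewrite /zsqrt_expr_im (bigD1 ord_max) //= binn subnn expr0 mulr1 mul1r.
rewrite addrAC subrr add0r.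
apply: rpred_sum => i; rewrite -(inj_eq val_inj) /= => /andP[oddi i_neqp].
rewrite -!mulrA; apply/dvdz_mulr/(primez_dvd_bin p_pr).
by have := ltn_ord i; case: (nat_of_ord i) oddi i_neqp => //; lia.
Qed.

End ZsqrtExprCongruences.

Lemma sqr_eq_double_sqr (m n : int) : m ^+ 2 = 2 * n ^+ 2 -> n = 0.
Proof.
move=> mn; apply/eqP; apply: contraTT isT => n0.
have m0 : m != 0 by apply: contraNneq n0 => m0; move: mn; rewrite m0 expr0n /=; lia.
have /(congr1 (logn 2)) := congr1 absz mn.
rewrite abszM !abszX lognM ?expn_gt0 ?absz_gt0 ?n0 // !lognX.
by rewrite (_ : logn 2 (absz 2) = 1%N) //; lia.
Qed.

Lemma intr_eq_mul_sqrt2 (R : rcfType) (m n : int) :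
  m%:~R = n%:~R * Num.sqrt 2 :> R -> m = 0 /\ n = 0.
Proof.
move=> mn; have n0 : n = 0.
  apply: (sqr_eq_double_sqr (m := m)); apply: (@intr_inj R).
  by rewrite [RHS]rmorphM !rmorphXn /= mn exprMn sqr_sqrtr ?ler0n // mulrC.
by move: mn; rewrite n0 mul0r; move/eqP; rewrite intr_eq0 => /eqP.
Qed.

Lemma zsqrt2_unit_mul_expr (R : rcfType) n (x a b : int) :
  x%:~R + Num.sqrt 2 =
    (1 + Num.sqrt 2) * (a%:~R + b%:~R * Num.sqrt 2) ^+ n :> R ->
  x = zsqrt_expr_re 2 n a b + 2 * zsqrt_expr_im 2 n a b /\
  zsqrt_expr_re 2 n a b + zsqrt_expr_im 2 n a b = 1.
Proof.
set s := Num.sqrt (2 : R).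
have ss2 : s * s = 2%:~R by rewrite -expr2 sqr_sqrtr ?ler0n.
rewrite (zsqrt_exprE ss2).
set A := zsqrt_expr_re _ _ _ _; set B := zsqrt_expr_im _ _ _ _ => eqx.
have [eq0x eq0AB] : x - A - 2 * B = 0 /\ A + B - 1 = 0.
  apply: (intr_eq_mul_sqrt2 (R := R)); rewrite -/s !rmorphB rmorphD rmorphM /=.
  have -> : x%:~R = (1 + s) * (A%:~R + B%:~R * s) - s by rewrite -eqx addrK.
  rewrite -ss2; ring.
by split; lia.
Qed.

Section ZsqrtTwoUnitValuations.
Variables (p : nat) (a b : int).
Hypotheses (p_pr : prime p) (p_odd : odd p).
Local Notation P := (p%:Z).
Local Notation A := (zsqrt_expr_re 2 p a b).
Local Notation B := (zsqrt_expr_im 2 p a b).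

Lemma primez_ndvd2 : ~~ (P %| 2%R)%Z.
Proof.
apply/negP; rewrite dvdzE /= => /dvdn_leq-/(_ isT).
by have := odd_prime_gt2 p_odd p_pr; lia.
Qed.

Lemma dvdz_im_b : (P %| B)%Z = (P %| b)%Z.
Proof.
rewrite (dvdz_eq_of_dvd_sub (zsqrt_expr_im_mod_p 2 a b p_pr p_odd)).
have p_gt2 := odd_prime_gt2 p_odd p_pr.
rewrite (Euclid_dvdzM p_pr) !(Euclid_dvdzX p_pr) ?(negbTE primez_ndvd2) ?orbF //; lia.
Qed.

Lemma dvdz_re_a : (P %| A)%Z = (P %| a)%Z.
Proof.
have pAap := dvdz_trans (dvdz_mulr _ (dvdzz P)) (zsqrt_expr_re_mod_pb2 2 a b p_pr p_odd).
by rewrite (dvdz_eq_of_dvd_sub pAap) (Euclid_dvdzX p_pr) ?prime_gt0.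
Qed.

Hypothesis AB1 : A + B = 1.

Lemma dvdz_a1_b : (P %| a - 1)%Z = (P %| b)%Z.
Proof.
have pAa : (P %| A - a)%Z.
  rewrite -[A - a](subrKA (a ^+ p)) rpredD ?fermat_little_int //.
  exact: dvdz_trans (dvdz_mulr _ (dvdzz P)) (zsqrt_expr_re_mod_pb2 2 a b p_pr p_odd).
rewrite -dvdz_im_b -[(_ %| B)%Z]rpredN; apply: dvdz_eq_of_dvd_sub.
by rewrite (_ : a - 1 - - B = - (A - a)) ?rpredN //; lia.
Qed.

Lemma primez_dvd_a_ndvd_b : (P %| a)%Z -> ~~ (P %| b)%Z.
Proof.
move=> pa; rewrite -dvdz_a1_b; apply: contra (primez_ndvd1 p_pr) => pa1.
by have := rpredB pa pa1; rewrite opprB addrC subrK.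
Qed.

Lemma dvdz_pexp_a1_b n : (P ^+ n %| a - 1)%Z = (P ^+ n %| b)%Z.
Proof.
apply: eq_dvdz_exp_of_dvdzD dvdz_a1_b _ => m pa1 pb.
have p_gt0 := prime_gt0 p_pr; have p_gt2 := odd_prime_gt2 p_odd p_pr.
have dvd_binom := dvdz_pexp_add1_exp p_pr p_gt2 pa1.
have dvd_re : (P ^+ m.+3 %| A - a ^+ p)%Z.
  apply: dvdz_trans (zsqrt_expr_re_mod_pb2 2 a b p_pr p_odd).
  rewrite (exprS P) dvdz_mul2l ?(primez_neq0 p_pr) //.
  by apply: dvdz_exp_mul pb _; lia.
have dvd_im : (P ^+ m.+3 %| B - P * a ^+ p.-1 * b)%Z.
  apply: dvdz_trans (zsqrt_expr_im_mod_b3 2 a b p_gt0).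
  by apply: dvdz_exp_mul pb _; lia.
have dvd_geom : (P ^+ m.+3 %| P * b * (a ^+ p.-1 - 1))%Z.
  rewrite (_ : P ^+ m.+3 = P * P ^+ m.+1 * P); last by rewrite -exprS -exprSr.
  apply: dvdz_mul; first exact: dvdz_mul (dvdzz P) pb.
  rewrite subrX1; apply/dvdz_mulr/(dvdz_trans _ pa1).
  by rewrite exprS; apply/dvdz_mulr/dvdzz.
rewrite -(dvdz_mul2l (primez_neq0 p_pr)) -exprS.
(* Each bracket below is a multiple of p^(m+3), and A + B - 1 = 0. *)
rewrite (_ : P * (a - 1 + b) = (A + B - 1)
    - ((1 + (a - 1)) ^+ p - 1 - P * (a - 1)) - (A - a ^+ p)
    - (B - P * a ^+ p.-1 * b) - P * b * (a ^+ p.-1 - 1)); last first.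
  by rewrite (_ : 1 + (a - 1) = a); ring.
rewrite AB1 subrr sub0r -!opprD rpredN.
by apply/rpredD/dvd_geom; apply/rpredD/dvd_im; apply/rpredD/dvd_re.
Qed.

Lemma dvdz_pexpS_im_b n : (P %| b)%Z -> (P ^+ n.+1 %| B)%Z = (P ^+ n %| b)%Z.
Proof.
move=> pb; have p_gt2 := odd_prime_gt2 p_odd p_pr.
have pe : ~~ (P %| a ^+ p.-1)%Z.
  rewrite (Euclid_dvdzX p_pr); last by lia.
  by apply: contraL pb; apply: primez_dvd_a_ndvd_b.
have b3B := zsqrt_expr_im_mod_b3 2 a b (prime_gt0 p_pr).
exact: (dvdz_pexpS_of_cube p_pr n pb pe b3B).
Qed.

Lemma dvdz_pexpS_re_a n : (P %| a)%Z -> (P ^+ n.+1 %| A)%Z = (P ^+ n %| a)%Z.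
Proof.
move=> pa; have p_gt2 := odd_prime_gt2 p_odd p_pr.
have pe : ~~ (P %| b ^+ p.-1 * 2 ^+ p./2)%Z.
  rewrite (Euclid_dvdzM p_pr) !(Euclid_dvdzX p_pr) ?(negbTE primez_ndvd2) ?orbF; try lia.
  exact: primez_dvd_a_ndvd_b.
have a3A : (a ^+ 3 %| A - P * (b ^+ p.-1 * 2 ^+ p./2) * a)%Z.
  have -> : P * (b ^+ p.-1 * 2 ^+ p./2) * a = P * a * b ^+ p.-1 * 2 ^+ p./2 by ring.
  exact: zsqrt_expr_re_mod_a3.
exact: (dvdz_pexpS_of_cube p_pr n pa pe a3A).
Qed.

End ZsqrtTwoUnitValuations.

Theorem theorem7p6 (R : rcfType) (p : nat) (x y a b : int) :
  prime p -> odd p ->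
  x ^+ 2 - 2 = y ^+ p -> y != -1 ->
  x%:~R + Num.sqrt (2 : R) =
    (1 + Num.sqrt 2) * (a%:~R + b%:~R * Num.sqrt 2) ^+ p ->
  [/\ vp p (a - 1) = vp p b,
      ((p%:Z %| b)%Z -> vp p (x - 1) = omap S (vp p b)) /\
      (~~ (p%:Z %| b)%Z -> ~~ (p%:Z %| x - 1)%Z) /\
      (~~ (p%:Z %| x - 1)%Z \/ ((p ^ 2)%:Z %| x - 1)%Z)
    & ((p%:Z %| a)%Z -> vp p (x - 2) = omap S (vp p a)) /\
      (~~ (p%:Z %| a)%Z -> ~~ (p%:Z %| x - 2)%Z) /\
      (~~ (p%:Z %| x - 2)%Z \/ ((p ^ 2)%:Z %| x - 2)%Z)].
Proof.
move=> p_pr p_odd _ _ /zsqrt2_unit_mul_expr[->].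
set A := zsqrt_expr_re 2 p a b; set B := zsqrt_expr_im 2 p a b => AB1.
have -> : A + 2 * B - 1 = B by lia.
have -> : A + 2 * B - 2 = - A by lia.
split.
- exact: (vp_eq p_pr (dvdz_pexp_a1_b p_pr p_odd AB1)).
- apply: (vp_succ_cases p_pr) => [pb n|]; first exact: (dvdz_pexpS_im_b p_pr p_odd AB1).
  exact: (dvdz_im_b a b p_pr p_odd).
apply: (vp_succ_cases p_pr) => [pa n|]; rewrite rpredN.
  exact: (dvdz_pexpS_re_a p_pr p_odd AB1).
exact: (dvdz_re_a a b p_pr p_odd).
Qed.
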